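(* Let $X$ be a complex Banach space, $\mathcal{F}$ an algebra with unit, and $\Phi_1,\Phi_2:\mathcal{F}\to\mathcal{C}(X)$ calculi. Suppose there is a subset $\mathcal{E}\subseteq\mathcal{F}$ such that (1) $\Phi_1(e)=\Phi_2(e)\in\mathcal{L}(X)$ for all $e\in\mathcal{E}$, and (2) $\mathcal{F}$ is anchored in $\mathcal{E}$ (with respect to $\Phi_1$, equivalently $\Phi_2$). Then $\Phi_1=\Phi_2$.
   Context: $\mathcal{F}$ need not be commutative. $\mathcal{L}(X)$, $\mathcal{C}(X)$: bounded, resp. closed linear operators on $X$; operator inclusions are graph inclusions, sums/products have natural domains, ''$Tx=y$'' means $x\in\mathrm{dom}(T)$, $Tx=y$. A proto-calculus is a map $\Phi:\mathcal{F}\to\mathcal{C}(X)$ with (FC1) $\Phi(\mathbf{1})=I$; (FC2) $\lambda\Phi(f)\subseteq\Phi(\lambda f)$, $\Phi(f)+\Phi(g)\subseteq\Phi(f+g)$; (FC3) $\Phi(f)\Phi(g)\subseteq\Phi(fg)$ with $\mathrm{dom}(\Phi(f)\Phi(g))=\mathrm{dom}(\Phi(g))\cap\mathrm{dom}(\Phi(fg))$. $\mathrm{bdd}(\mathcal{F},\Phi)=\{f:\Phi(f)\in\mathcal{L}(X)\}$, $\mathrm{reg}(f,\Phi)=\{e: e,ef\in\mathrm{bdd}(\mathcal{F},\Phi)\}$. A calculus is a proto-calculus such that for every $f\in\mathcal{F}$ and $x,y\in X$: $\Phi(f)x=y\iff\Phi(ef)x=\Phi(e)y$ for all $e\in\mathrm{reg}(f,\Phi)$.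 For $\mathcal{E}\subseteq\mathcal{F}$ and $f\in\mathcal{F}$ let $[f]_{\mathcal{E}}=\{e\in\mathcal{E}:ef\in\mathcal{E}\}$; $f$ is anchored in $\mathcal{E}$ (w.r.t. $\Phi$) if $[f]_{\mathcal{E}}$ is nonempty, consists of $\Phi$-bounded elements, and $\bigcap_{e\in[f]_{\mathcal{E}}}\ker\Phi(e)=\{0\}$; $\mathcal{F}$ is anchored in $\mathcal{E}$ if every $f\in\mathcal{F}$ is. *)

From mathcomp Require Import all_boot all_algebra.
From mathcomp Require Import complex.
From mathcomp Require Import all_classical all_reals all_analysis.
Set Implicit Arguments. Unset Strict Implicit. Unset Printing Implicit Defensive.
Import GRing.Theory Num.Theory.
Local Open Scope ring_scope.
Local Open Scope classical_set_scope.

(* Scalars: the complex numbers R[i] for R : realType.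
   X : completeNormedModType R[i] is a complex Banach space.
   A (possibly unbounded) operator on X is represented by its graph. *)
Section Ops.
Variables (R : realType) (X : completeNormedModType R[i]).

Definition op := X -> X -> Prop.

Definition op_dom (T : op) (x : X) : Prop := exists y, T x y.

(* linear operator: the graph is a linear subspace of X x X which is single-valued *)
Definition is_linop (T : op) : Prop :=
  [/\ T 0 0,
      (forall x1 y1 x2 y2, T x1 y1 -> T x2 y2 -> T (x1 + x2) (y1 + y2)),
      (forall (a : R[i]) x y, T x y -> T (a *: x) (a *: y)) &
      (forall y, T 0 y -> y = 0)].

Definition closed_op (T : op) : Prop :=
  is_linop T /\ closed [set p : X * X | T p.1 p.2].

Definition bounded_op (T : op) : Prop :=
  [/\ is_linop T, (forall x, op_dom T x) &
      exists M : R[i], forall x y, T x y -> `|y| <= M * `|x|].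

Definition op_incl (T S : op) : Prop := forall x y, T x y -> S x y.

Definition op_add (T S : op) : op :=
  fun x z => exists y1 y2, [/\ T x y1, S x y2 & z = y1 + y2].
Definition op_scale (a : R[i]) (T : op) : op :=
  fun x z => exists y, T x y /\ z = a *: y.
(* op_comp T S = T S  (first apply S, then T) *)
Definition op_comp (T S : op) : op :=
  fun x z => exists y, S x y /\ T y z.
Definition op_id : op := fun x y => y = x.

End Ops.

Section Calculus.
Variables (R : realType) (X : completeNormedModType R[i]) (F : algType R[i]).

Definition proto_calculus (Phi : F -> op X) : Prop :=
  [/\ (forall f, closed_op (Phi f)),
      Phi 1 = @op_id R X,
      (forall (l : R[i]) f, op_incl (op_scale l (Phi f)) (Phi (l *: f))) /\
      (forall f g, op_incl (op_add (Phi f) (Phi g)) (Phi (f + g)))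
    & forall f g, op_incl (op_comp (Phi f) (Phi g)) (Phi (f * g)) /\
        (forall x, op_dom (op_comp (Phi f) (Phi g)) x <->
                   op_dom (Phi g) x /\ op_dom (Phi (f * g)) x)] .

Definition Phi_bdd (Phi : F -> op X) (f : F) : Prop := bounded_op (Phi f).

Definition Phi_reg (Phi : F -> op X) (f e : F) : Prop :=
  Phi_bdd Phi e /\ Phi_bdd Phi (e * f).

Definition calculus (Phi : F -> op X) : Prop :=
  proto_calculus Phi /\
  forall f x y, Phi f x y <->
    (forall e, Phi_reg Phi f e -> exists z, Phi e y z /\ Phi (e * f) x z).

Definition anchor_set (E : set F) (f : F) : set F :=
  [set e | E e /\ E (e * f)].

Definition anchored_in (Phi : F -> op X) (E : set F) (f : F) : Prop :=
  [/\ exists e, anchor_set E f e,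
      (forall e, anchor_set E f e -> Phi_bdd Phi e) &
      (forall x, (forall e, anchor_set E f e -> Phi e x 0) -> x = 0)].

Definition all_anchored_in (Phi : F -> op X) (E : set F) : Prop :=
  forall f, anchored_in Phi E f.

End Calculus.

From mathcomp Require Import all_boot all_algebra.
From mathcomp Require Import complex.
From mathcomp Require Import all_classical all_reals all_analysis.
Set Implicit Arguments. Unset Strict Implicit. Unset Printing Implicit Defensive.
Import GRing.Theory Num.Theory.
Local Open Scope ring_scope.
Local Open Scope classical_set_scope.

(* Phi1 and Phi2 never conflict: if Phi1(g)x = z and Phi2(g)x = z', then for
   every d in [g]_E the product rule gives Phi(d)z = Phi(dg)x = Phi(d)z', so
   Phi(d)(z - z') = 0 and anchoring forces z = z'.  Now let Phi1(f)x = y and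
   e in reg(f, Phi2).  For d in [e]_E, Phi2(d)Phi2(e)y = Phi1(de)y is the value
   of Phi1(def) at x, and Phi2(d)Phi2(ef)x is that of Phi2(def); by the first
   step they agree, so anchoring gives Phi2(e)y = Phi2(ef)x and the calculus
   property of Phi2 yields Phi2(f)x = y.  By symmetry the graphs coincide. *)

Section LinearOperators.
Variables (R : realType) (X : completeNormedModType R[i]).
Implicit Type T : op X.

Lemma linop_sub T x1 y1 x2 y2 : is_linop T -> T x1 y1 -> T x2 y2 ->
  T (x1 - x2) (y1 - y2).
Proof.
case=> _ T_add T_scale _ T1 T2.
by apply: T_add T1 _; rewrite -[- x2]scaleN1r -[- y2]scaleN1r; apply: T_scale.
Qed.

Lemma linop_subK T x1 x2 y : is_linop T -> T x1 y -> T x2 y -> T (x1 - x2) 0.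
Proof. by move=> T_lin T1 T2; rewrite -(subrr y); apply: linop_sub. Qed.

Lemma linop_functional T x y1 y2 : is_linop T -> T x y1 -> T x y2 -> y1 = y2.
Proof.
move=> T_lin T1 T2; apply/subr0_eq.
by case: T_lin (linop_sub T_lin T1 T2) => _ _ _; rewrite subrr; apply.
Qed.

End LinearOperators.

Section Uniqueness.
Variables (R : realType) (X : completeNormedModType R[i]) (F : algType R[i]).
Variables (Phi1 Phi2 : F -> op X) (E : set F).

Lemma proto_calculus_mul (Phi : F -> op X) f g x y z :
  proto_calculus Phi -> Phi g x y -> Phi f y z -> Phi (f * g) x z.
Proof. by case=> _ _ _ FC3 Pg Pf; apply: (FC3 f g).1; exists y. Qed.

Lemma proto_calculus_linop (Phi : F -> op X) f :
  proto_calculus Phi -> is_linop (Phi f).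
Proof. by case=> Phi_closed _ _ _; case: (Phi_closed f). Qed.

Hypothesis Phi1_pc : proto_calculus Phi1.
Hypothesis Phi2_calc : calculus Phi2.
Hypothesis Phi12_E : forall e, E e -> Phi1 e = Phi2 e.
Hypothesis Phi1_bdd_E : forall e, E e -> bounded_op (Phi1 e).
Hypothesis Phi1_anchor_sep :
  forall f x, (forall e, anchor_set E f e -> Phi1 e x 0) -> x = 0.

Lemma calculi_compatible g x z z' : Phi1 g x z -> Phi2 g x z' -> z = z'.
Proof.
move=> P1g P2g; apply/subr0_eq/(Phi1_anchor_sep (f := g)) => d [Ed Edg].
have [d_lin d_total _] := Phi1_bdd_E Ed.
have [[u P1dz] [u' P1dz']] := (d_total z, d_total z').
have P1dg : Phi1 (d * g) x u := proto_calculus_mul Phi1_pc P1g P1dz.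
have P2dg : Phi2 (d * g) x u'.
  by apply: proto_calculus_mul Phi2_calc.1 P2g _; rewrite -Phi12_E.
rewrite -Phi12_E // in P2dg.
have u_eq := linop_functional (proto_calculus_linop _ Phi1_pc) P1dg P2dg; subst u'.
exact: linop_subK d_lin P1dz P1dz'.
Qed.

Lemma calculus_graph_incl f : op_incl (Phi1 f) (Phi2 f).
Proof.
move=> x y P1f; apply/Phi2_calc.2 => e [[_ e_total _] [_ ef_total _]].
have [[z P2ey] [w P2efx]] := (e_total y, ef_total x).
exists z; split => //; suff -> : z = w by [].
apply/subr0_eq/(Phi1_anchor_sep (f := e)) => d [Ed Ede].
have [d_lin d_total _] := Phi1_bdd_E Ed.
have [[v P1dz] [u P1dw]] := (d_total z, d_total w).
have P2dey : Phi2 (d * e) y v.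
  by apply: proto_calculus_mul Phi2_calc.1 P2ey _; rewrite -Phi12_E.
have P1def : Phi1 (d * e * f) x v.
  by apply: proto_calculus_mul Phi1_pc P1f _; rewrite Phi12_E.
have P2def : Phi2 (d * e * f) x u.
  by rewrite -mulrA; apply: proto_calculus_mul Phi2_calc.1 P2efx _; rewrite -Phi12_E.
have vu := calculi_compatible P1def P2def; subst u.
exact: linop_subK d_lin P1dz P1dw.
Qed.

End Uniqueness.

Theorem theorem5p2 (R : realType) (X : completeNormedModType R[i]) (F : algType R[i])
    (Phi1 Phi2 : F -> op X) (E : set F) :
  calculus Phi1 -> calculus Phi2 ->
  (forall e, E e -> Phi1 e = Phi2 e /\ bounded_op (Phi1 e)) ->
  all_anchored_in Phi1 E ->
  Phi1 = Phi2.
Proof.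
move=> C1 C2 HE HA.
have Phi12_E e : E e -> Phi1 e = Phi2 e by case/HE.
have Phi21_E e : E e -> Phi2 e = Phi1 e by move/Phi12_E.
have Phi1_bdd_E e : E e -> bounded_op (Phi1 e) by case/HE.
have Phi2_bdd_E e : E e -> bounded_op (Phi2 e).
  by move=> Ee; rewrite -Phi12_E //; apply: Phi1_bdd_E.
have Phi1_sep f x : (forall e, anchor_set E f e -> Phi1 e x 0) -> x = 0.
  by case: (HA f) => _ _; apply.
have Phi2_sep f x : (forall e, anchor_set E f e -> Phi2 e x 0) -> x = 0.
  by move=> P2; apply: (Phi1_sep f) => e [Ee Eef]; rewrite Phi12_E //; apply: P2.
apply/funext => f; apply/funext => x; apply/funext => y; apply/propext; split.
- exact: (calculus_graph_incl C1.1 C2 Phi12_E Phi1_bdd_E Phi1_sep).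
- exact: (calculus_graph_incl C2.1 C1 Phi21_E Phi2_bdd_E Phi2_sep).
Qed.
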